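(* Let $L$ be an i--lattice. Then: (1) for all $\theta\in{\rm Con}(L)$, $Cg_{L,\mathbb{I}}(\theta)=\theta\vee\theta'$; (2) for all $U\subseteq L^2$, $Cg_{L,\mathbb{I}}(U)=Cg_L(U)\vee(Cg_L(U))'=Cg_L(U)\vee Cg_L(U')$; (3) for all $a,b\in L$, $Cg_{L,\mathbb{I}}(a,b)=Cg_L(a,b)\vee(Cg_L(a,b))'=Cg_L(a,b)\vee Cg_L(a',b')$.
   Context: An i--lattice is a lattice $L$ with a unary operation $'$ such that $a''=a$ and $a\leq b\Rightarrow b'\leq a'$. ${\rm Con}(L)$ is the lattice of lattice congruences (joins $\vee$ in ${\rm Con}(L)$). $Cg_L(U)$ is the lattice congruence generated by $U\subseteq L^2$ and $Cg_{L,\mathbb{I}}(U)$ the congruence of the i--lattice $L$ (lattice congruence preserving $'$) generated by $U$; $Cg_L(a,b)=Cg_L(\{(a,b)\})$, similarly for $Cg_{L,\mathbb{I}}(a,b)$. For $U\subseteq L^2$, $U'=\{(a',b'):(a,b)\in U\}$. *)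

From HB Require Import structures.
From mathcomp Require Import all_boot all_order.
Set Implicit Arguments. Unset Strict Implicit. Unset Printing Implicit Defensive.
Import Order.Theory.
Local Open Scope order_scope.

Definition brel (T : Type) := T -> T -> Prop.

Definition releq (T : Type) (R S : brel T) : Prop := forall x y, R x y <-> S x y.

Section Congruences.
Context {disp : Order.disp_t} {L : latticeType disp}.

Definition is_lcong (th : brel L) : Prop :=
  [/\ (forall a, th a a),
      (forall a b, th a b -> th b a),
      (forall a b c, th a b -> th b c -> th a c),
      (forall a b c e, th a b -> th c e -> th (a `&` c) (b `&` e)) &
      (forall a b c e, th a b -> th c e -> th (a `|` c) (b `|` e))].

Definition is_ilattice (inv : L -> L) : Prop :=
  (forall a, inv (inv a) = a) /\ (forall a b, a <= b -> inv b <= inv a).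

Definition is_icong (inv : L -> L) (th : brel L) : Prop :=
  is_lcong th /\ (forall a b, th a b -> th (inv a) (inv b)).

Definition Cg (U : brel L) : brel L :=
  fun a b => forall th, is_lcong th -> (forall x y, U x y -> th x y) -> th a b.

Definition CgI (inv : L -> L) (U : brel L) : brel L :=
  fun a b => forall th, is_icong inv th -> (forall x y, U x y -> th x y) -> th a b.

Definition pairrel (a b : L) : brel L := fun x y => x = a /\ y = b.

Definition relinv (inv : L -> L) (U : brel L) : brel L :=
  fun x y => exists a b, U a b /\ x = inv a /\ y = inv b.

(* join in Con(L): congruence generated by the union *)
Definition cjoin (th ps : brel L) : brel L := Cg (fun a b => th a b \/ ps a b).

End Congruences.

(* An order-reversing involution ' turns meets into joins and back, so the
   preimage of a lattice congruence under ' is again a lattice congruence.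
   Hence the lattice congruence generated by a '-closed set of pairs is itself
   closed under ', and Cg_{L,I}(U) = Cg_L(U u U') for every U; the three
   statements follow from Cg_L(A u B) = Cg_L(A) v Cg_L(B) and
   Cg_L(U)' = Cg_L(U'). *)
From HB Require Import structures.
From mathcomp Require Import all_boot all_order.

Import Order.Theory.
Local Open Scope order_scope.

Definition relsub {T : Type} (R S : brel T) : Prop := forall x y, R x y -> S x y.

Lemma releq_refl {T : Type} (R : brel T) : releq R R.
Proof. by []. Qed.

Lemma releq_sym {T : Type} {R S : brel T} : releq R S -> releq S R.
Proof. by move=> RS x y; split=> /RS. Qed.

Lemma releq_trans {T : Type} {R S Q : brel T} :
  releq R S -> releq S Q -> releq R Q.
Proof. by move=> RS SQ x y; split=> [/RS/SQ | /SQ/RS]. Qed.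

Lemma relsub_releq {T : Type} {R S : brel T} :
  relsub R S -> relsub S R -> releq R S.
Proof. by move=> RS SR x y; split; [apply: RS | apply: SR]. Qed.

Lemma lcong_preim_dual {d1 d2 : Order.disp_t}
    {L1 : latticeType d1} {L2 : latticeType d2} {f : L1 -> L2} {th : brel L2} :
  {morph f : a b / a `&` b >-> a `|` b} -> {morph f : a b / a `|` b >-> a `&` b} ->
  is_lcong th -> is_lcong (fun x y => th (f x) (f y)).
Proof.
move=> fI fU [refl sym trans meet join]; split=> //.
- by move=> a b; apply: sym.
- by move=> a b c; apply: trans.
- by move=> a b c e ab ce; rewrite !fI; apply: join.
- by move=> a b c e ab ce; rewrite !fU; apply: meet.
Qed.

Section GeneratedCongruence.
Context {disp : Order.disp_t} {L : latticeType disp}.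
Implicit Types (U V th : brel L).

Lemma Cg_lcong U : is_lcong (Cg U).
Proof.
split=> [a | a b ab | a b c ab bc | a b c e ab ce | a b c e ab ce] th thP UP;
  case: (thP) => refl sym trans meet join.
- exact: refl.
- exact: sym (ab th thP UP).
- exact: trans (ab th thP UP) (bc th thP UP).
- exact: meet (ab th thP UP) (ce th thP UP).
- exact: join (ab th thP UP) (ce th thP UP).
Qed.

Lemma subrel_Cg U : relsub U (Cg U).
Proof. by move=> x y Uxy th _; apply. Qed.

Lemma Cg_min {U th} : is_lcong th -> relsub U th -> relsub (Cg U) th.
Proof. by move=> thP UP x y; apply. Qed.

Lemma CgS {U V} : relsub U V -> relsub (Cg U) (Cg V).
Proof.
by move=> UV; apply: Cg_min (Cg_lcong V) _ => x y /UV; apply: subrel_Cg.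
Qed.

Lemma Cg_releq {U V} : releq U V -> releq (Cg U) (Cg V).
Proof. by move=> UV; apply: relsub_releq; apply: CgS => u v /UV. Qed.

Lemma cjoin_lcong U V : is_lcong (cjoin U V).
Proof. exact: Cg_lcong. Qed.

Lemma cjoin_releq {U1 U2 V1 V2} :
  releq U1 U2 -> releq V1 V2 -> releq (cjoin U1 V1) (cjoin U2 V2).
Proof.
by move=> UE VE; apply: Cg_releq => x y; split=> [[/UE | /VE] | [/UE | /VE]];
  by [left | right].
Qed.

Lemma cjoin_Cg U V : releq (cjoin (Cg U) (Cg V)) (cjoin U V).
Proof.
apply: relsub_releq; last by apply: CgS => u v [] ?; [left | right]; apply: subrel_Cg.
apply: Cg_min (cjoin_lcong U V) _ => u v [].
- by apply: CgS => p q Upq; left.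
- by apply: CgS => p q Vpq; right.
Qed.

End GeneratedCongruence.

Section InvolutionLattice.
Context {disp : Order.disp_t} {L : latticeType disp}.
Variable inv : L -> L.
Hypothesis invP : is_ilattice inv.
Implicit Types (U : brel L).

Lemma invK : involutive inv.
Proof. by case: invP. Qed.

Lemma inv_le a b : (inv a <= b) = (inv b <= a).
Proof.
have le_inv c e : inv c <= e -> inv e <= c.
  by case: invP => K anti /anti; rewrite K.
by apply/idP/idP; apply: le_inv.
Qed.

Lemma inv_meet : {morph inv : a b / a `&` b >-> a `|` b}.
Proof.
move=> a b; apply/le_anti; rewrite leUx !(inv_le a, inv_le b) invK leIl leIr.
by rewrite inv_le lexI (inv_le _ a) (inv_le _ b) leUl leUr.
Qed.

Lemma inv_join : {morph inv : a b / a `|` b >-> a `&` b}.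
Proof. by move=> a b; rewrite -[RHS]invK inv_meet !invK. Qed.

Lemma lcong_preim_inv {th} : is_lcong th -> is_lcong (fun x y => th (inv x) (inv y)).
Proof. exact: lcong_preim_dual inv_meet inv_join. Qed.

Lemma relinvE U x y : relinv inv U x y <-> U (inv x) (inv y).
Proof.
split; first by case=> a [b [Uab [-> ->]]]; rewrite !invK.
by move=> Uxy; exists (inv x), (inv y); rewrite !invK.
Qed.

Lemma Cg_inv_closed U :
  relsub U (relinv inv U) -> relsub (Cg U) (relinv inv (Cg U)).
Proof.
move=> UU' x y xy; apply/relinvE; move: xy.
apply: (Cg_min (lcong_preim_inv (Cg_lcong U))) => u v /UU' /relinvE.
exact: subrel_Cg.
Qed.

Lemma cjoin_relinv_closed U :
  relsub (cjoin U (relinv inv U)) (relinv inv (cjoin U (relinv inv U))).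
Proof.
apply: Cg_inv_closed => u v [Uuv | U'uv]; apply/relinvE; [right | left].
- by apply/relinvE; rewrite !invK.
- exact/relinvE.
Qed.

(* Part (1) thus holds for every relation, congruence or not. *)
Lemma CgI_cjoin U : releq (CgI inv U) (cjoin U (relinv inv U)).
Proof.
move=> x y; split.
- apply; last by move=> u v Uuv; apply: subrel_Cg; left.
  split; first exact: cjoin_lcong.
  by move=> a b /cjoin_relinv_closed /relinvE.
- move=> xy th [thP th_inv] UP; apply: Cg_min thP _ _ _ xy.
  by move=> u v [/UP // | /relinvE /UP /th_inv]; rewrite !invK.
Qed.

Lemma relinv_Cg U : releq (relinv inv (Cg U)) (Cg (relinv inv U)).
Proof.
apply: relsub_releq => x y.
- move=> /relinvE xy; rewrite -[x]invK -[y]invK; move: xy.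
  apply: (Cg_min (lcong_preim_inv (Cg_lcong _))) => u v Uuv.
  by apply: subrel_Cg; apply/relinvE; rewrite !invK.
- move=> xy; apply/relinvE; move: xy.
  apply: (Cg_min (lcong_preim_inv (Cg_lcong _))) => u v /relinvE.
  exact: subrel_Cg.
Qed.

Lemma CgI_cjoin_Cg U : releq (CgI inv U) (cjoin (Cg U) (relinv inv (Cg U))).
Proof.
apply: releq_trans (CgI_cjoin U) _; apply: releq_trans (releq_sym (cjoin_Cg _ _)) _.
exact: cjoin_releq (releq_refl _) (releq_sym (relinv_Cg U)).
Qed.

Lemma cjoin_relinv_Cg U :
  releq (cjoin (Cg U) (relinv inv (Cg U))) (cjoin (Cg U) (Cg (relinv inv U))).
Proof. exact: cjoin_releq (releq_refl _) (relinv_Cg U). Qed.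

Lemma relinv_pairrel (a b : L) :
  releq (relinv inv (pairrel a b)) (pairrel (inv a) (inv b)).
Proof.
move=> x y; split; first by case=> a' [b' [[-> ->] [-> ->]]].
by case=> -> ->; exists a, b.
Qed.

End InvolutionLattice.

Theorem lemma4p30 (disp : Order.disp_t) (L : latticeType disp) (inv : L -> L) :
  is_ilattice inv ->
  (forall th : brel L, is_lcong th ->
     releq (CgI inv th) (cjoin th (relinv inv th)))
  /\
  (forall U : brel L,
     releq (CgI inv U) (cjoin (Cg U) (relinv inv (Cg U)))
     /\ releq (cjoin (Cg U) (relinv inv (Cg U))) (cjoin (Cg U) (Cg (relinv inv U))))
  /\
  (forall a b : L,
     releq (CgI inv (pairrel a b)) (cjoin (Cg (pairrel a b)) (relinv inv (Cg (pairrel a b))))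
     /\ releq (cjoin (Cg (pairrel a b)) (relinv inv (Cg (pairrel a b))))
              (cjoin (Cg (pairrel a b)) (Cg (pairrel (inv a) (inv b))))).
Proof.
move=> invP; split; first by move=> th _; apply: CgI_cjoin.
split; first by move=> U; split; [apply: CgI_cjoin_Cg | apply: cjoin_relinv_Cg].
move=> a b; split; first exact: CgI_cjoin_Cg.
apply: releq_trans (cjoin_relinv_Cg _ invP (pairrel a b)) _.
exact: cjoin_releq (releq_refl _) (Cg_releq (relinv_pairrel inv a b)).
Qed.
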